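(* Let $\mathsf{Prop}$ be a non-empty finite set of propositions and $\mathsf{L}$ any fragment of $\mathsf{ATL}(\mathsf{Prop})$. For every sample $\mathcal{S}=(\mathcal{P},\mathcal{N})$ of concurrent game structures in $\mathcal{C}(\mathsf{Prop})$, if there is an $\mathcal{S}$-separating $\mathsf{L}$-formula, then there is one of size at most $2^n$, where $n:=\sum_{C\in\mathcal{P}\cup\mathcal{N}}|Q_C|$.
   Context: A concurrent game structure is $C=(Q,I,k,P,\pi,d,\delta)$: $Q=Q_C$ a finite set of states, $I\subseteq Q$ initial states, $k\ge1$ the number of agents ($\mathsf{Ag}=\{1,\dots,k\}$), $P$ a finite non-empty set of propositions, $\pi:Q\to2^P$, $d:Q\times\mathsf{Ag}\to\mathbb{N}_{\ge1}$ the number of actions of each agent at each state, and $\delta$ mapping each state $q$ and tuple $(\alpha_1,\dots,\alpha_k)$ with $\alpha_a\in\{1,\dots,d(q,a)\}$ to a successor state. For a coalition $A\subseteq\mathsf{Ag}$ and a tuple $\alpha$ of actions for agents in $A$ at $q$, $\mathsf{Succ}(q,\alpha)$ is the set of states $\delta(q,(\alpha,\alpha'))$ over all action tuples $\alpha'$ of the other agents. A strategy of agent $a$ maps each $\rho_0\cdots\rho_n\in Q^+$ to an action in $\{1,\dots,d(\rho_n,a)\}$; a strategy profile $s$ for $A$ is one strategy per agent of $A$, and $\mathsf{O}(q,s)$ is the set of $\rho\in Q^\omega$ with $\rho[0]=q$ and $\rho[i+1]\in\mathsf{Succ}(\rho[i],(s_a(\rho[0]\cdots\rho[i]))_{a\in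 A})$ for all $i$. $\mathcal{C}(\mathsf{Prop})$ is the set of such $C$ with $P\subseteq\mathsf{Prop}$. $\mathsf{ATL}(\mathsf{Prop})$-formulas: $\varphi::=p\mid\neg\varphi\mid\varphi\vee\varphi\mid\varphi\wedge\varphi\mid\langle\langle A\rangle\rangle\mathbf{X}\varphi\mid\langle\langle A\rangle\rangle\mathbf{F}\varphi\mid\langle\langle A\rangle\rangle\mathbf{G}\varphi\mid\langle\langle A\rangle\rangle(\varphi\,\mathbf{U}\,\varphi)$ with $p\in\mathsf{Prop}$ and $A$ a coalition of agents. Semantics: $q\models p$ iff $p\in\pi(q)$; Boolean connectives as usual; $q\models\langle\langle A\rangle\rangle\mathbf{X}\varphi$ iff some profile $s$ for $A$ has $\rho[1]\models\varphi$ for all $\rho\in\mathsf{O}(q,s)$; $\mathbf{F}$: $\exists s\,\forall\rho\in\mathsf{O}(q,s)\,\exists i$, $\rho[i]\models\varphi$; $\mathbf{G}$: $\exists s\,\forall\rho\,\forall i$, $\rho[i]\models\varphi$; $\mathbf{U}$: $\exists s\,\forall\rho\,\exists i$, $\rho[i]\models\varphi_2$ and $\forall j<i$, $\rho[j]\models\varphi_1$. $C\models\varphi$ iff all $q\in I$ satisfy $\varphi$. A fragment is given by a subset of the operators; $\mathsf{sz}(\varphi)$ is the number of distinct subformulas. A sample is a pair of finite sets of structures; a formula is $\mathcal{S}$-separating if satisfied by all structures of $\mathcal{P}$ and by none of $\mathcal{N}$. *)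

From HB Require Import structures.
From mathcomp Require Import all_boot.
From mathcomp Require Import finmap.
From Stdlib Require List.

Set Implicit Arguments.
Unset Strict Implicit.
Unset Printing Implicit Defensive.

Local Open Scope fset_scope.

(* Agents are 'I_k (agent i : 'I_k is the paper's agent i+1); the actions    *)
(* of agent a at q are 'I_(d q a) (the paper's 1..d(q,a), shifted by one).   *)
Record CGS (AP : finType) := {
  cgs_Q : finType;
  cgs_I : {set cgs_Q};
  cgs_k : nat;
  cgs_k_pos : 0 < cgs_k;
  cgs_P : {set AP};
  cgs_P_nonempty : cgs_P != set0;
  cgs_pi : cgs_Q -> {set AP};
  cgs_pi_sub : forall q, cgs_pi q \subset cgs_P;
  cgs_d : cgs_Q -> 'I_cgs_k -> nat;
  cgs_d_pos : forall q a, 0 < cgs_d q a;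
  cgs_delta : forall q : cgs_Q, (forall a : 'I_cgs_k, 'I_(cgs_d q a)) -> cgs_Q
}.

(* ATL(Prop) formulas.  Coalitions are finite sets of (1-based) agent names. *)
Inductive form (AP : finType) : Type :=
  | FProp of AP
  | FNeg of form AP
  | FOr of form AP & form AP
  | FAnd of form AP & form AP
  | FX of {fset nat} & form AP
  | FF of {fset nat} & form AP
  | FG of {fset nat} & form AP
  | FU of {fset nat} & form AP & form AP.

Lemma form_eq_dec (AP : finType) (x y : form AP) : {x = y} + {x <> y}.
Proof.
decide equality;
  match goal with |- {?u = ?v} + {_} =>
    by case: (eqVneq u v) => [->|/eqP h]; [left|right] end.
Defined.

HB.instance Definition _ (AP : finType) :=
  hasDecEq.Build (form AP) (compareP (@form_eq_dec AP)).

Fixpoint subf (AP : finType) (f : form AP) : seq (form AP) :=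
  f :: match f with
       | FProp _ => [::]
       | FNeg g | FX _ g | FF _ g | FG _ g => subf g
       | FOr g h | FAnd g h | FU _ g h => subf g ++ subf h
       end.

Definition sz (AP : finType) (f : form AP) : nat := size (undup (subf f)).

Inductive op := OpNeg | OpOr | OpAnd | OpX | OpF | OpG | OpU.

Fixpoint in_frag (AP : finType) (L : op -> bool) (f : form AP) : bool :=
  match f with
  | FProp _ => true
  | FNeg g => L OpNeg && in_frag L g
  | FOr g h => [&& L OpOr, in_frag L g & in_frag L h]
  | FAnd g h => [&& L OpAnd, in_frag L g & in_frag L h]
  | FX _ g => L OpX && in_frag L g
  | FF _ g => L OpF && in_frag L g
  | FG _ g => L OpG && in_frag L g
  | FU _ g h => [&& L OpU, in_frag L g & in_frag L h]
  end.

Section Semantics.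
Variables (AP : finType) (C : CGS AP).
Notation Q := (cgs_Q C).
Notation k := (cgs_k C).

Definition in_coal (A : {fset nat}) (i : 'I_k) : bool := (val i).+1 \in A.

(* A strategy of agent a maps a history rho_0 ... rho_{n-1} rho_n, given as
   (rho_0 ... rho_{n-1}, rho_n), to an action available at rho_n. *)
Definition strategy (a : 'I_k) := seq Q -> forall q : Q, 'I_(@cgs_d _ C q a).

(* a strategy profile (only the strategies of agents in the coalition matter) *)
Definition profile := forall a : 'I_k, strategy a.

Definition outcome (A : {fset nat}) (q : Q) (s : profile) (rho : nat -> Q) :=
  rho 0 = q /\
  forall i, exists beta : (forall a : 'I_k, 'I_(@cgs_d _ C (rho i) a)),
    (forall a, in_coal A a -> beta a = s a (mkseq rho i) (rho i)) /\
    rho i.+1 = cgs_delta beta.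

Fixpoint sat (f : form AP) (q : Q) {struct f} : Prop :=
  match f with
  | FProp p => p \in @cgs_pi _ C q
  | FNeg g => ~ sat g q
  | FOr g h => sat g q \/ sat h q
  | FAnd g h => sat g q /\ sat h q
  | FX A g => exists s, forall rho, outcome A q s rho -> sat g (rho 1)
  | FF A g => exists s, forall rho, outcome A q s rho -> exists i, sat g (rho i)
  | FG A g => exists s, forall rho, outcome A q s rho -> forall i, sat g (rho i)
  | FU A g h => exists s, forall rho, outcome A q s rho ->
                  exists i, sat h (rho i) /\ forall j, j < i -> sat g (rho j)
  end.

Definition models (f : form AP) : Prop := forall q, q \in cgs_I C -> sat f q.

End Semantics.

Definition separating (AP : finType) (Pos Neg : seq (CGS AP)) (f : form AP) :=
  (forall C, List.In C Pos -> models C f) /\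
  (forall C, List.In C Neg -> ~ models C f).

Definition sample_size (AP : finType) (Pos Neg : seq (CGS AP)) : nat :=
  \sum_(C <- Pos) #|cgs_Q C| + \sum_(C <- Neg) #|cgs_Q C|.

From mathcomp Require Import all_boot.
From Stdlib Require List.
From mathcomp Require Import zify.
From Stdlib Require Import Setoid ClassicalEpsilon.

(* A formula is determined, as far as the sample is concerned, by its truth
   table over the n states of the sample, and there are only 2^n tables.  If a
   separating formula f has more than 2^n distinct subformulas, two of them,
   g and h, have the same table, and we may choose g not to occur in h.
   Replacing every occurrence of g in f by h keeps the formula in the
   fragment, does not change its truth value at any state of the sample, and
   strictly decreases the number of distinct subformulas. Iterating gives a
   separating formula of size at most 2^n. *)

Set Implicit Arguments.
Unset Strict Implicit.

Ltac elim_form f :=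
  elim: f => [p|a IHa|a IHa b IHb|a IHa b IHb|A a IHa|A a IHa|A a IHa|A a IHa b IHb].

Section Subformulas.
Variable AP : finType.
Implicit Types f g h x : form AP.

Lemma subf_refl f : f \in subf f.
Proof. by case: f => * /=; rewrite in_cons eqxx. Qed.

Lemma subf_trans g h f : g \in subf h -> h \in subf f -> g \in subf f.
Proof.
move=> gh; elim_form f; rewrite [h \in _]/= in_cons => /orP [/eqP <- // | H];
  rewrite /= in_cons ?mem_cat; apply/orP; right.
all: rewrite ?in_nil ?mem_cat in H *; try by [|exact: IHa].
all: by case/orP: H => [/IHa -> | /IHb ->]; rewrite ?orbT.
Qed.

Lemma size_subf_le g f : g \in subf f -> size (subf g) <= size (subf f).
Proof.
elim_form f; rewrite [g \in _]/= in_cons => /orP [/eqP -> // | H].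
all: rewrite ?in_nil ?mem_cat in H; try by [|move: (IHa H) => /=; lia].
all: by case/orP: H => [/IHa | /IHb] /=; rewrite size_cat; lia.
Qed.

Lemma size_subf_lt g f : g \in subf f -> g != f -> size (subf g) < size (subf f).
Proof.
case: f => [p|a|a b|a b|A a|A a|A a|A a b];
  rewrite [g \in _]/= in_cons => /orP [/eqP -> /eqP // | H] _.
all: rewrite ?in_nil ?mem_cat in H; try by [|move: (size_subf_le H) => /=; lia].
all: by case/orP: H => /size_subf_le /=; rewrite size_cat; lia.
Qed.

Lemma subf_antisym g h : g \in subf h -> h \in subf g -> g = h.
Proof.
move=> gh hg; apply/eqP/negPn/negP => /(size_subf_lt gh).
by rewrite ltnNge size_subf_le.
Qed.

Lemma in_frag_subf L f g : in_frag L f -> g \in subf f -> in_frag L g.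
Proof.
elim_form f => /= Lf; rewrite in_cons => /orP [/eqP -> // | H].
all: rewrite ?in_nil ?mem_cat in H; try by [|case/andP: Lf => _ /IHa; apply].
all: by case/and3P: Lf => _ /IHa Ha /IHb Hb; case/orP: H; [apply: Ha | apply: Hb].
Qed.

Fixpoint replace g h f : form AP :=
  if f == g then h else
  match f with
  | FProp p => FProp p
  | FNeg a => FNeg (replace g h a)
  | FOr a b => FOr (replace g h a) (replace g h b)
  | FAnd a b => FAnd (replace g h a) (replace g h b)
  | FX A a => FX A (replace g h a)
  | FF A a => FF A (replace g h a)
  | FG A a => FG A (replace g h a)
  | FU A a b => FU A (replace g h a) (replace g h b)
  end.

Lemma replace_self g h : replace g h g = h.
Proof. by case: g => * /=; rewrite eqxx. Qed.

Lemma replace_id g h f : g \notin subf f -> replace g h f = f.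
Proof.
elim_form f; rewrite /= in_cons negb_or => /andP [ne H]; rewrite eq_sym (negbTE ne) //.
all: rewrite ?mem_cat ?negb_or in H; try by rewrite IHa.
all: by case/andP: H => /IHa -> /IHb ->.
Qed.

Lemma subf_replace g h f x : x \in subf (replace g h f) ->
  x \in subf h \/ exists2 s, s \in subf f & x = replace g h s.
Proof.
elim_form f; rewrite /=; case: eqP => [_|ne]; try by left.
all: rewrite /= in_cons => /orP [/eqP ->|H];
  [by right; eexists; [apply: mem_head | rewrite /= (introF eqP ne)]|].
all: rewrite ?in_nil ?mem_cat in H => //.
all: try case/orP: H => H.
all: (case: (IHa H) || case: (IHb H)) => [|[s s1 s2]]; [by left | right; exists s => //].
all: by rewrite /= in_cons ?mem_cat s1 ?orbT.
Qed.

Lemma in_frag_replace L g h f : in_frag L h -> in_frag L f -> in_frag L (replace g h f).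
Proof.
move=> Lh; elim_form f; rewrite /=; case: eqP => // _ /=.
all: try by case/andP => -> /IHa.
all: by case/and3P => -> /IHa -> /IHb.
Qed.

(* Every subformula of [replace g h f] is the image of a subformula of [f]
   other than [g] (a subformula of [h] is its own image), so [g] is lost. *)
Lemma sz_replace_lt g h f :
  g \in subf f -> h \in subf f -> g \notin subf h -> sz (replace g h f) < sz f.
Proof.
move=> gf hf gh; rewrite /sz; set U := undup (subf f).
have mem_remU x : x \in subf f -> x != g -> x \in rem g U.
  by move=> xf xg; rewrite (mem_rem_uniq _ (undup_uniq _)) inE mem_undup xf andbT xg.
have sub : {subset undup (subf (replace g h f)) <= map (replace g h) (rem g U)}.
  move=> x; rewrite mem_undup => /subf_replace [xh | [s sf ->]].
    have gx : g \notin subf x by apply: contra gh => gx; exact: subf_trans gx xh.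
    rewrite -(replace_id h gx); apply/map_f/mem_remU; first exact: subf_trans xh hf.
    by apply: contraNneq gx => ->; exact: subf_refl.
  have [-> | sg] := eqVneq s g; last exact/map_f/mem_remU.
  rewrite replace_self -{1}(replace_id h gh); apply/map_f/mem_remU => //.
  by apply: contraNneq gh => <-; exact: subf_refl.
have gU : g \in U by rewrite mem_undup.
have := uniq_leq_size (undup_uniq _) sub; rewrite size_map size_rem //.
by case: (U) gU => // _ s _; rewrite ltnS.
Qed.

End Subformulas.

Lemma sat_replace AP (C : CGS AP) g h :
  (forall q : cgs_Q C, sat g q <-> sat h q) ->
  forall f (q : cgs_Q C), sat (replace g h f) q <-> sat f q.
Proof.
move=> gh f; elim_form f => q; rewrite /=; case: eqP => [e | _]; try by rewrite -gh -e.
all: rewrite //=; try by rewrite IHa.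
all: try by rewrite IHa IHb.
all: by setoid_rewrite IHa; try setoid_rewrite IHb.
Qed.

Lemma pigeonhole_undup (T : eqType) (U : finType) (F : T -> U) (s : seq T) :
  #|U| < size (undup s) -> exists x y, [/\ x \in s, y \in s, x != y & F x = F y].
Proof.
move=> big; pose coll x := has (fun y => (x != y) && (F x == F y)) (undup s).
have [/hasP [x xs /hasP [y ys /andP [ne /eqP e]]] | /hasPn nocoll] := boolP (has coll (undup s)).
  by exists x, y; rewrite -!(mem_undup s).
have injF : {in undup s &, injective F}.
  move=> x y xs ys e; apply/eqP/negPn/negP => ne.
  by move: (nocoll x xs) => /hasPn /(_ y ys); rewrite ne e eqxx.
have := max_card (mem (map F (undup s))).
by rewrite (card_uniqP _) ?map_inj_in_uniq ?undup_uniq // size_map leqNgt big.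
Qed.

Section Samples.
Variable AP : finType.
Implicit Types (Ls Pos Neg : seq (CGS AP)) (f g h : form AP).

Definition equiv_in Ls g h :=
  forall C, List.In C Ls -> forall q : cgs_Q C, sat g q <-> sat h q.

Lemma separating_replace Pos Neg g h f :
  equiv_in (Pos ++ Neg) g h -> separating Pos Neg f -> separating Pos Neg (replace g h f).
Proof.
move=> gh [fPos fNeg].
have models_replace C : List.In C (Pos ++ Neg) -> models C (replace g h f) <-> models C f.
  by move=> /gh CE; split=> M q /M; apply (sat_replace CE).
split=> C CS.
  by apply/models_replace; [apply: List.in_or_app; left | exact: fPos].
by rewrite models_replace; [exact: fNeg | apply: List.in_or_app; right].
Qed.

Fixpoint sample_state Ls : finType :=
  if Ls is C :: Ls' then (cgs_Q C + sample_state Ls')%type else void.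

Lemma card_sample_state Ls : #|{: sample_state Ls}| = \sum_(C <- Ls) #|cgs_Q C|.
Proof. by elim: Ls => [|C Ls IH]; rewrite ?big_nil ?card_void // big_cons card_sum IH. Qed.

Fixpoint sat_sample Ls f : sample_state Ls -> Prop :=
  if Ls is C :: Ls' return sample_state Ls -> Prop then
    fun x => match x with inl q => sat f q | inr y => sat_sample f y end
  else fun _ => False.

Lemma sat_sample_equiv_in Ls g h :
  (forall x : sample_state Ls, sat_sample g x <-> sat_sample h x) -> equiv_in Ls g h.
Proof.
elim: Ls => [|C' Ls IH] gh C //= [<- | CLs] q; first exact: (gh (inl q)).
by apply: IH CLs q => x; exact: (gh (inr x)).
Qed.

Definition truth_table Ls f : {ffun sample_state Ls -> bool} :=
  [ffun x => if excluded_middle_informative (sat_sample f x) then true else false].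

Lemma truth_tableE Ls f x : truth_table Ls f x <-> sat_sample f x.
Proof. by rewrite ffunE; case: excluded_middle_informative. Qed.

Lemma truth_table_equiv_in Ls g h : truth_table Ls g = truth_table Ls h -> equiv_in Ls g h.
Proof. by move=> gh; apply: sat_sample_equiv_in => x; rewrite -!truth_tableE gh. Qed.

Lemma equiv_in_subf Ls f :
  2 ^ #|{: sample_state Ls}| < sz f ->
  exists g h, [/\ g \in subf f, h \in subf f, g \notin subf h & equiv_in Ls g h].
Proof.
rewrite -card_bool -card_ffun => /(pigeonhole_undup (truth_table Ls)).
move=> [g [h [gf hf ne /truth_table_equiv_in gh]]].
have [hg | ngh] := boolP (g \in subf h); last by exists g, h.
exists h, g; split=> //; last by move=> C /gh E q; symmetry; apply: E.
by apply: contra ne => /subf_antisym /(_ hg) ->.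
Qed.

Lemma shrink_separating L Pos Neg f :
  in_frag L f -> separating Pos Neg f -> 2 ^ sample_size Pos Neg < sz f ->
  exists f', [/\ in_frag L f', separating Pos Neg f' & sz f' < sz f].
Proof.
rewrite /sample_size -big_cat -card_sample_state => Lf Sf /equiv_in_subf.
move=> [g [h [gf hf gh E]]]; exists (replace g h f); split.
- exact: in_frag_replace (in_frag_subf Lf hf) Lf.
- exact: separating_replace.
- exact: sz_replace_lt.
Qed.

End Samples.

Theorem corollary8 (AP : finType) (hAP : 0 < #|AP|) (L : op -> bool)
    (Pos Neg : seq (CGS AP))
    (hPos : List.NoDup Pos) (hNeg : List.NoDup Neg) :
  (exists f : form AP, in_frag L f /\ separating Pos Neg f) ->
  exists f : form AP, [/\ in_frag L f, separating Pos Neg f &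
                          sz f <= 2 ^ sample_size Pos Neg].
Proof.
move=> [f [Lf Sf]]; have [m] := ubnP (sz f).
elim: m f Lf Sf => // m IH f Lf Sf szf.
have [small | big] := leqP (sz f) (2 ^ sample_size Pos Neg); first by exists f.
have [f' [Lf' Sf' lt]] := shrink_separating Lf Sf big.
exact: IH f' Lf' Sf' (leq_trans lt szf).
Qed.
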